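(* Let $\mathcal{F}$ be a linear $3$-uniform family and let $\mathcal{M}$ be a maximum matching of $\mathcal{F}$. If $A,B,C$ are three distinct members of $\mathcal{M}$ and $|D_2(A,B)|=8$, then $|D_2(A,C)|+|D_2(B,C)|\leq 12$.
   Context: A family is a finite collection of distinct subsets of a vertex set; $3$-uniform means every member has exactly $3$ elements and linear means any two distinct members share at most one vertex. A matching is a collection of pairwise disjoint members; a maximum matching is one of largest possible size. $X_{\mathcal{M}}=\bigcup_{A\in\mathcal{M}}A$, $D_2(\mathcal{F})=\{E\in\mathcal{F}:|E\cap X_{\mathcal{M}}|=2\}$, and for $A,B\in\mathcal{M}$, $D_2(A,B)=\{E\in D_2(\mathcal{F}): E\cap A\neq\emptyset,\ E\cap B\neq\emptyset\}$. *)

From mathcomp Require Import all_boot.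
Set Implicit Arguments. Unset Strict Implicit. Unset Printing Implicit Defensive.

Section Defs.
Variable T : finType.

Definition uniform3 (F : {set {set T}}) : Prop :=
  forall E, E \in F -> #|E| = 3.

Definition linear_family (F : {set {set T}}) : Prop :=
  forall E1 E2, E1 \in F -> E2 \in F -> E1 != E2 -> #|E1 :&: E2| <= 1.

Definition is_matching (F M : {set {set T}}) : Prop :=
  M \subset F /\
  forall A B, A \in M -> B \in M -> A != B -> [disjoint A & B].

Definition is_maximum_matching (F M : {set {set T}}) : Prop :=
  is_matching F M /\ forall M', is_matching F M' -> #|M'| <= #|M|.

Definition XM (M : {set {set T}}) : {set T} := \bigcup_(A in M) A.

Definition D2 (F M : {set {set T}}) : {set {set T}} :=
  [set E in F | #|E :&: XM M| == 2].

Definition D2AB (F M : {set {set T}}) (A B : {set T}) : {set {set T}} :=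
  [set E in D2 F M | (E :&: A != set0) && (E :&: B != set0)].

End Defs.

From mathcomp Require Import all_boot zify.
Set Implicit Arguments. Unset Strict Implicit. Unset Printing Implicit Defensive.

(* A member of D2(P, Q) is determined by its two vertices in X_M (linearity),
   so |D2(P, Q)| <= 9, and |D2(A, B)| = 8 means that all pairs of A x B but one
   are covered.  Suppose moreover that |D2(A, C)| >= 7 and that D2(B, C) has a
   member.  Label the vertices of A, B, C by 0..8 and view these members as
   edges between labels, coloured by their vertex outside X_M.  Edges sharing a
   labelled vertex get different colours (linearity), and there can be neither
   three pairwise disjoint edges inside two members of M nor four inside A, B,
   C, since these would give a larger matching.  An exhaustive search over all
   colourings up to renaming, checked by computation, shows that these
   constraints cannot be met.  So |D2(A, C)| >= 7 forces D2(B, C) = set0, and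
   symmetrically, which gives the bound 12. *)

Lemma pairwise_in_sym (X : eqType) (r : rel X) (s : seq X) :
  symmetric r -> pairwise r s -> {in s &, forall x y, x != y -> r x y}.
Proof.
move=> rS; elim: s => //= x s IH /andP[/allP rx ps] y z; rewrite !inE.
case/orP => [/eqP-> | ys] /orP[/eqP-> | zs] yz; rewrite ?eqxx // in yz.
- exact: rx z zs.
- by rewrite rS; apply: rx y ys.
- exact: IH ps y z ys zs yz.
Qed.

Lemma sorted_pair_eq (p q : nat * nat) : p.1 < p.2 -> q.1 < q.2 ->
  (p.1 == q.1) || (p.1 == q.2) -> (p.2 == q.1) || (p.2 == q.2) ->
  (q.1 == p.1) || (q.1 == p.2) -> p = q.
Proof. by case: p q => [a b] [c d] /= *; apply/eqP; rewrite xpair_eqE; lia. Qed.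

Section MaximumMatching.
Variables (T : finType) (F M : {set {set T}}).
Hypotheses (F3 : uniform3 F) (linF : linear_family F)
  (maxM : is_maximum_matching F M).

Lemma matching_sub : M \subset F.
Proof. by case: maxM => -[]. Qed.

Lemma matching_disjoint D D' :
  D \in M -> D' \in M -> D != D' -> [disjoint D & D'].
Proof. by case: maxM => -[_ disjM] _; apply: disjM. Qed.

Lemma matching_eq (D D' : {set T}) x :
  D \in M -> D' \in M -> x \in D -> x \in D' -> D = D'.
Proof.
move=> DM D'M xD xD'; apply/eqP; apply: contraTT xD'.
by move=> /(matching_disjoint DM D'M)/disjointFr->.
Qed.

Lemma card_matching D : D \in M -> #|D| = 3.
Proof. by move/(subsetP matching_sub)/F3. Qed.

Lemma sub_XM D : D \in M -> D \subset XM M.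
Proof. exact: bigcup_sup. Qed.

Lemma maximum_matching_exchange (N S : {set {set T}}) :
  N \subset M -> S \subset F -> set0 \notin S ->
  {in S &, forall s1 s2 : {set T}, s1 != s2 -> [disjoint s1 & s2]} ->
  {in S & M :\: N, forall s D : {set T}, [disjoint s & D]} ->
  #|S| <= #|N|.
Proof.
move=> sNM sSF S0 disjS disjSM.
have matchingS : is_matching F ((M :\: N) :|: S).
  split; first by rewrite subUset sSF (subset_trans (subsetDl M N) matching_sub).
  move=> P Q; rewrite !in_setU => /orP[PMN|PS] /orP[QMN|QS] PQ.
  - by apply: matching_disjoint PQ; apply: (subsetP (subsetDl M N)).
  - by rewrite disjoint_sym; apply: disjSM.
  - exact: disjSM.
  - exact: disjS.
have disjMS : [disjoint M :\: N & S].
  apply/pred0P => s /=; apply/negP => /andP[sMN sS].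
  have := disjSM s s sS sMN; rewrite -setI_eq0 setIid => /eqP s0.
  by rewrite -s0 sS in S0.
have := maxM.2 _ matchingS.
rewrite cardsU (disjoint_setI0 disjMS) cards0 subn0 cardsD (setIidPr sNM).
have := subset_leq_card sNM; lia.
Qed.

Lemma linear_eq E1 E2 x y : E1 \in F -> E2 \in F -> x != y ->
  x \in E1 -> y \in E1 -> x \in E2 -> y \in E2 -> E1 = E2.
Proof.
move=> F1 F2 xy x1 y1 x2 y2; case: (eqVneq E1 E2) => // /(linF F1 F2).
have : [set x; y] \subset E1 :&: E2.
  by apply/subsetP => z; rewrite !inE => /orP[]/eqP->; apply/andP.
by move/subset_leq_card; rewrite cards2 xy => /leq_trans/[apply].
Qed.

Lemma D2_shape E x y : E \in D2 F M -> x != y -> x \in E -> y \in E ->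
  x \in XM M -> y \in XM M ->
  E :&: XM M = [set x; y] /\ exists w, E :\: XM M = [set w].
Proof.
rewrite inE => /andP[EF /eqP EX2] xy xE yE xX yX.
have EX : E :&: XM M = [set x; y].
  apply/esym/eqP; rewrite eqEcard cards2 xy EX2 leqnn andbT.
  by apply/subsetP => z; rewrite !inE => /orP[]/eqP->; apply/andP.
split=> //; apply/cards1P.
by have := cardsID (XM M) E; rewrite (F3 EF) EX2; lia.
Qed.

Definition D2_covers (x y : T) := [exists E in D2 F M, (x \in E) && (y \in E)].

Definition D2_edge (p : T * T) :=
  odflt set0 [pick E in D2 F M | (p.1 \in E) && (p.2 \in E)].

Lemma D2_edgeP x y : D2_covers x y ->
  [/\ D2_edge (x, y) \in D2 F M, x \in D2_edge (x, y) & y \in D2_edge (x, y)].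
Proof.
rewrite /D2_edge; case: pickP => [E /andP[ED /andP[xE yE]] //| none].
by case/existsP => E /andP[ED xyE]; have := none E; rewrite ED xyE.
Qed.

Lemma D2_edge_eq E x y : E \in D2 F M -> x != y -> x \in E -> y \in E ->
  D2_edge (x, y) = E.
Proof.
move=> ED xy xE yE.
have cov : D2_covers x y by apply/existsP; exists E; rewrite ED xE yE.
have [eD xe ye] := D2_edgeP cov.
by move: eD ED; rewrite !inE => /andP[eF _] /andP[EF _]; apply: (linear_eq eF EF xy).
Qed.

Lemma card_D2AB_le P Q : P \in M -> Q \in M -> P != Q ->
  #|D2AB F M P Q| <= #|[set p in setX P Q | D2_covers p.1 p.2]|.
Proof.
move=> PM QM PQ; apply: leq_trans (leq_imset_card D2_edge _).
apply/subset_leq_card/subsetP => E.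
rewrite inE => /andP[ED /andP[/set0Pn[x /setIP[xE xP]] /set0Pn[y /setIP[yE yQ]]]].
have xy : x != y.
  by apply: contraNneq PQ => exy; apply/eqP; apply: (matching_eq PM QM xP); rewrite exy.
apply/imsetP; exists (x, y); last by rewrite (D2_edge_eq ED xy xE yE).
by rewrite !inE xP yQ; apply/existsP; exists E; rewrite ED xE yE.
Qed.

Lemma card_D2AB_le9 P Q : P \in M -> Q \in M -> P != Q -> #|D2AB F M P Q| <= 9.
Proof.
move=> PM QM PQ.
have sub : [set p in setX P Q | D2_covers p.1 p.2] \subset setX P Q.
  by apply/subsetP => p; rewrite inE => /andP[].
rewrite (leq_trans (card_D2AB_le PM QM PQ)) // (leq_trans (subset_leq_card sub)) //.
by rewrite cardsX !card_matching.
Qed.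

Lemma D2AB8_missing_pair P Q : P \in M -> Q \in M -> P != Q ->
  #|D2AB F M P Q| = 8 ->
  exists2 p, p \in setX P Q & {in setX P Q, forall q, q != p -> D2_covers q.1 q.2}.
Proof.
move=> PM QM PQ D8.
set S := [set p in setX P Q | D2_covers p.1 p.2].
have SX : S \subset setX P Q by apply/subsetP => p; rewrite inE => /andP[].
have card_missing : #|setX P Q :\: S| <= 1.
  have := card_D2AB_le PM QM PQ; rewrite -/S cardsD (setIidPr SX) cardsX.
  by rewrite !card_matching // D8; lia.
have missingS q : q \in setX P Q -> ~~ D2_covers q.1 q.2 -> q \in setX P Q :\: S.
  by move=> qX qc; rewrite in_setD qX andbT in_set qX /= (negbTE qc).
have [p pX] : exists p, p \in setX P Q.
  by apply/card_gt0P; rewrite cardsX !card_matching.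
case: (set_0Vmem (setX P Q :\: S)) => [S0|[m mS]].
  exists p => // q qX _; apply: contraT => /(missingS q qX).
  by rewrite S0 inE.
exists m; first by move: mS; rewrite inE => /andP[].
move=> q qX qm; apply: contraT => /(missingS q qX) qS.
by move/card_le1_eqP: card_missing => /(_ q m qS mS) qEm; rewrite qEm eqxx in qm.
Qed.

End MaximumMatching.

Lemma D2AB_sym (T : finType) (F M : {set {set T}}) P Q : D2AB F M P Q = D2AB F M Q P.
Proof. by apply/setP => E; rewrite !in_set; congr andb; rewrite andbC. Qed.

(* Abstract configurations: a vertex n < 9 lies in block n %/ 3 (standing for
   A, B, C), an edge is a pair (u, v) with u < v, and a colouring assigns a
   colour to each edge index. *)
Definition meet (e f : nat * nat) :=
  [|| e.1 == f.1, e.1 == f.2, e.2 == f.1 | e.2 == f.2].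

Definition same_blocks (e f : nat * nat) :=
  (e.1 %/ 3 == f.1 %/ 3) && (e.2 %/ 3 == f.2 %/ 3).

Definition wf_edge (e : nat * nat) := e.1 < e.2 < 9.

Lemma meet_sym : symmetric meet.
Proof.
by move=> e f; apply/idP/idP; rewrite /meet => /or4P[]/eqP->; rewrite eqxx ?orbT.
Qed.

Section Conflict.
Variables (es : seq (nat * nat)) (cs : seq nat).
Let e i := nth (0, 0) es i.
Let c i := nth 0 cs i.

Definition apart i j := ~~ meet (e i) (e j) && (c i != c j).

(* Edge k conflicts with the earlier edges if it shares a vertex and a colour
   with one of them, or completes three pairwise apart edges within the same two
   blocks, or four pairwise apart edges. *)
Definition conflict k :=
  has (fun i => (c i == c k) && meet (e i) (e k)) (iota 0 k) ||
  let D := [seq i <- iota 0 k | apart i k] in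
  has (fun i => let D' := [seq j <- D | (j < i) && apart j i] in
     has (fun j => same_blocks (e i) (e k) && same_blocks (e j) (e k)) D' ||
     has (fun j => has (fun l => (l < j) && apart l j) D') D') D.

End Conflict.

(* Colourings are enumerated up to renaming as restricted growth strings: edge k
   gets either the new colour k or the colour of an edge r < k coloured r. *)
Definition candidates (cs : seq nat) :=
  rcons [seq r <- iota 0 (size cs) | nth 0 cs r == r] (size cs).

Fixpoint refutes (es : seq (nat * nat)) (fuel : nat) (cs : seq nat) : bool :=
  if fuel is fuel'.+1 then
    all (fun x => let cs' := rcons cs x in
                  if conflict es cs' (size cs) then true else refutes es fuel' cs')
        (candidates cs)
  else false.

Lemma refutesP es fuel cs full : refutes es fuel cs ->
  size full = size cs + fuel -> cs = take (size cs) full ->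
  (forall k, size cs <= k < size full -> nth 0 full k \in candidates (take k full)) ->
  exists2 k, k < size full & conflict es (take k.+1 full) k.
Proof.
elim: fuel cs => [|fuel IH] cs //= ref sz pre cand.
have ltk : size cs < size full by rewrite sz addnS ltnS leq_addr.
have next : take (size cs).+1 full = rcons cs (nth 0 full (size cs)).
  by rewrite (take_nth 0 ltk) -pre.
have /cand : size cs <= size cs < size full by rewrite leqnn.
rewrite -pre => /(allP ref); rewrite -next.
case: ifP => [confl _ | _ ref']; first by exists (size cs).
apply: (IH _ ref'); rewrite size_takel //; first by rewrite sz addSnnS.
by move=> k /andP[ltk' ltkf]; apply: cand; rewrite ltkf (ltnW ltk').
Qed.

Section FirstOccurrence.
Variables (X : eqType) (s : seq X).
Let f := [seq index x s | x <- s].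

Lemma first_occurrence_eq x0 i j : i < size s -> j < size s ->
  (nth 0 f i == nth 0 f j) = (nth x0 s i == nth x0 s j).
Proof.
move=> lti ltj; rewrite !(nth_map x0) //; apply/eqP/eqP => [eij | -> //].
by rewrite -(nth_index x0 (mem_nth x0 lti)) eij nth_index // mem_nth.
Qed.

Lemma first_occurrence_candidates k : k < size s -> nth 0 f k \in candidates (take k f).
Proof.
move=> ks; have x0 : X by case: s ks => [|x].
rewrite /candidates size_takel ?size_map ?(ltnW ks) // mem_rcons inE.
have fk : nth 0 f k = index (nth x0 s k) s by rewrite (nth_map x0).
have [// | ltk] := eqVneq (nth 0 f k) k.
have lt_fk : nth 0 f k < k by rewrite ltn_neqAle ltk fk index_nth.
rewrite mem_filter mem_iota lt_fk nth_take // andbT /=.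
by rewrite (first_occurrence_eq x0) ?(ltn_trans lt_fk) // fk nth_index ?mem_nth ?eqxx.
Qed.

End FirstOccurrence.

Fixpoint subseqs (X : Type) (s : seq X) : seq (seq X) :=
  if s is x :: s' then [seq x :: t | t <- subseqs s'] ++ subseqs s' else [:: [::]].

Lemma mem_subseqs (X : eqType) (s t : seq X) : subseq t s -> t \in subseqs s.
Proof.
elim: s t => [|x s IH] [|y t] //=; rewrite mem_cat.
  by rewrite IH ?sub0seq ?orbT.
case: eqP => [-> /IH tS | _ /IH ->]; last by rewrite orbT.
by apply/orP; left; apply/mapP; exists t.
Qed.

Definition block (T : finType) (A B C : {set T}) (n : nat) : {set T} :=
  nth set0 [:: A; B; C] (n %/ 3).

Section Realization.
Variables (T : finType) (F M : {set {set T}}) (A B C : {set T}).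
Hypotheses (F3 : uniform3 F) (linF : linear_family F)
  (maxM : is_maximum_matching F M) (AM : A \in M) (BM : B \in M) (CM : C \in M).
Variable lab : nat -> T.
Hypotheses (lab_inj : {in gtn 9 &, injective lab})
  (lab_block : forall n, n < 9 -> lab n \in block A B C n).
Variable es : seq (nat * nat).
Hypotheses (es_wf : all wf_edge es) (es_uniq : uniq es)
  (es_covered : {in es, forall e, D2_covers F M (lab e.1) (lab e.2)}).

Let e i := nth (0, 0) es i.
Let R i := D2_edge F M (lab (e i).1, lab (e i).2).
Let col i := R i :\: XM M.
Let apartR i j := ~~ meet (e i) (e j) && (col i != col j).

Lemma block_M n : n < 9 -> block A B C n \in M.
Proof.
move=> n9; have : n %/ 3 < 3 by rewrite ltn_divLR.
by rewrite /block; case: (n %/ 3) => [|[|[|]]].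
Qed.

Lemma lab_XM n : n < 9 -> lab n \in XM M.
Proof. by move=> n9; apply: (subsetP (sub_XM (block_M n9))); apply: lab_block. Qed.

Lemma lab_eq m n : m < 9 -> n < 9 -> (lab m == lab n) = (m == n).
Proof. by move=> m9 n9; apply/eqP/eqP => [|-> //]; apply: lab_inj. Qed.

Lemma edge_wf i : i < size es -> (e i).1 < (e i).2 < 9.
Proof. by move=> ies; apply: (allP es_wf); rewrite mem_nth. Qed.

Lemma edge_lt9 i : i < size es -> (e i).1 < 9 /\ (e i).2 < 9.
Proof. by move/edge_wf => /andP[lt12 lt29]; rewrite (ltn_trans lt12). Qed.

Lemma R_shape i : i < size es ->
  [/\ R i \in F, lab (e i).1 \in R i, lab (e i).2 \in R i,
      R i :&: XM M = [set lab (e i).1; lab (e i).2] & exists w, col i = [set w]].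
Proof.
move=> ies; have /andP[lt12 lt29] := edge_wf ies; have [lt19 _] := edge_lt9 ies.
have [RD l1 l2] := D2_edgeP (es_covered (mem_nth (0, 0) ies)).
have l12 : lab (e i).1 != lab (e i).2 by rewrite lab_eq ?ltn_eqF.
have [RX col1] := D2_shape F3 RD l12 l1 l2 (lab_XM lt19) (lab_XM lt29).
by split => //; move: RD; rewrite inE => /andP[].
Qed.

Lemma R_XM i z : i < size es -> z \in R i -> z \in XM M ->
  (z == lab (e i).1) || (z == lab (e i).2).
Proof.
move=> ies zR zX; have [_ _ _ RX _] := R_shape ies.
have : z \in R i :&: XM M by rewrite inE zR zX.
by rewrite RX !inE.
Qed.

Lemma R_lab i a : i < size es -> a < 9 -> lab a \in R i ->
  (a == (e i).1) || (a == (e i).2).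
Proof.
move=> ies a9 aR; have [lt19 lt29] := edge_lt9 ies.
by rewrite -!(lab_eq a9) //; apply: R_XM => //; apply: lab_XM.
Qed.

Lemma col_mem i w : i < size es -> col i = [set w] -> w \in R i /\ w \notin XM M.
Proof.
move=> _ ciw; have : w \in col i by rewrite ciw set11.
by rewrite inE => /andP[].
Qed.

Lemma meet_col_eq i j : i < size es -> j < size es ->
  meet (e i) (e j) -> col i = col j -> i = j.
Proof.
move=> ies jes mij cij.
have [Fi i1 i2 _ [w ciw]] := R_shape ies; have [Fj j1 j2 _ _] := R_shape jes.
have [wRi wX] := col_mem ies ciw; have [wRj _] := col_mem jes (etrans (esym cij) ciw).
have [lti19 lti29] := edge_lt9 ies; have [ltj19 ltj29] := edge_lt9 jes.
have [v [v9 vi vj]] : exists v, [/\ v < 9, lab v \in R i & lab v \in R j].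
  move: mij; rewrite /meet => /or4P[]/eqP eij;
  [exists (e i).1 | exists (e i).1 | exists (e i).2 | exists (e i).2];
  by split => //; rewrite eij.
have Rij : R i = R j.
  apply: (linear_eq linF Fi Fj _ vi wRi vj wRj).
  by apply: contraNneq wX => <-; apply: lab_XM.
have eij : e i = e j.
  rewrite Rij in i1 i2; rewrite -Rij in j1.
  move: (R_lab jes lti19 i1) (R_lab jes lti29 i2) (R_lab ies ltj19 j1).
  have /andP[lti _] := edge_wf ies; have /andP[ltj _] := edge_wf jes.
  exact: sorted_pair_eq lti ltj.
by apply/eqP; rewrite -(nth_uniq (0, 0) ies jes es_uniq); apply/eqP.
Qed.

Lemma apart_disjoint i j : i < size es -> j < size es ->
  apartR i j -> [disjoint R i & R j].
Proof.
move=> ies jes /andP[nmeet cij]; apply/pred0P => z /=; apply/negP => /andP[zi zj].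
have [_ _ _ _ [wi ciw]] := R_shape ies; have [_ _ _ _ [wj cjw]] := R_shape jes.
case zX: (z \in XM M).
  have [? ?] := edge_lt9 ies; have [? ?] := edge_lt9 jes.
  case/orP: (R_XM ies zi zX) => /eqP zl; case/orP: (R_XM jes zj zX);
  by rewrite zl lab_eq // => /eqP eij; move: nmeet; rewrite /meet eij eqxx ?orbT.
have zc k w : k < size es -> z \in R k -> col k = [set w] -> z = w.
  by move=> _ zk ckw; apply/set1P; rewrite -ckw inE zX.
by move: cij; rewrite ciw cjw -(zc i wi) // -(zc j wj) // eqxx.
Qed.

Lemma R_disjoint_M i D : i < size es -> D \in M ->
  D != block A B C (e i).1 -> D != block A B C (e i).2 -> [disjoint R i & D].
Proof.
move=> ies DM neq1 neq2; apply/pred0P => z /=; apply/negP => /andP[zR zD].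
have [lt19 lt29] := edge_lt9 ies.
case/orP: (R_XM ies zR (subsetP (sub_XM DM) z zD)) => /eqP zl; rewrite zl in zD.
- by move: neq1; rewrite (matching_eq maxM DM (block_M lt19) zD (lab_block lt19)) eqxx.
- by move: neq2; rewrite (matching_eq maxM DM (block_M lt29) zD (lab_block lt29)) eqxx.
Qed.

Lemma apartR_sym : symmetric apartR.
Proof. by move=> i j; rewrite /apartR meet_sym eq_sym. Qed.

Lemma apartR_irr : irreflexive apartR.
Proof. by move=> i; rewrite /apartR eqxx andbF. Qed.

Lemma apart_size_le (N : {set {set T}}) ix : N \subset M ->
  {subset ix <= gtn (size es)} -> pairwise apartR ix ->
  {in ix, forall i, (block A B C (e i).1 \in N) && (block A B C (e i).2 \in N)} ->
  size ix <= #|N|.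
Proof.
move=> sNM ixes pix ixN.
have apx := pairwise_in_sym apartR_sym pix.
have R0 i : i < size es -> R i != set0.
  by move=> ies; have [_ l1 _ _ _] := R_shape ies; apply/set0Pn; exists (lab (e i).1).
have R_inj : {in ix &, injective R}.
  move=> i j ii jj Rij; apply/eqP; apply: contraT => ij.
  have := apart_disjoint (ixes i ii) (ixes j jj) (apx i j ii jj ij).
  by rewrite -Rij -setI_eq0 setIid (negbTE (R0 i (ixes i ii))).
have -> : size ix = #|[set E in map R ix]|.
  rewrite cardsE (card_uniqP _) ?size_map // map_inj_in_uniq //.
  exact: pairwise_uniq apartR_irr pix.
apply: (maximum_matching_exchange maxM sNM).
- by apply/subsetP => E; rewrite inE => /mapP[i /ixes ies ->]; have [] := R_shape ies.
- by apply/negP; rewrite inE => /mapP[i /ixes ies /esym/eqP]; apply/negP/R0.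
- move=> E1 E2; rewrite !inE => /mapP[i ii ->] /mapP[j jj ->] Rij.
  apply: apart_disjoint (ixes i ii) (ixes j jj) _; apply: apx => //.
  by apply: contraNneq Rij => ->.
- move=> E D; rewrite !inE => /mapP[i ii ->] /andP[DN DM].
  have /andP[N1 N2] := ixN i ii.
  by apply: R_disjoint_M (ixes i ii) DM _ _; apply: contraNneq DN => ->.
Qed.

Lemma no_apart_triple i j k : i < size es -> j < size es -> k < size es ->
  same_blocks (e i) (e k) -> same_blocks (e j) (e k) ->
  apartR i j -> apartR i k -> apartR j k -> False.
Proof.
move=> ies jes kes sik sjk aij aik ajk; have [k19 k29] := edge_lt9 kes.
set N := [set block A B C (e k).1; block A B C (e k).2].
have sameN x : same_blocks (e x) (e k) ->
    (block A B C (e x).1 \in N) && (block A B C (e x).2 \in N).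
  by case/andP => /eqP b1 /eqP b2; rewrite /block b1 b2 !inE !eqxx orbT.
have : 3 <= #|N|.
  apply: (apart_size_le (ix := [:: i; j; k])).
  - by apply/subsetP => D; rewrite !inE => /orP[]/eqP->; apply: block_M.
  - by move=> x; rewrite !inE => /or3P[]/eqP->.
  - by rewrite /= aij aik ajk.
  - move=> x; rewrite mem_seq3 => /or3P[]/eqP->; apply: sameN => //.
    by rewrite /same_blocks !eqxx.
by rewrite cards2; case: (_ != _).
Qed.

Lemma no_apart_quad i j l k :
  i < size es -> j < size es -> l < size es -> k < size es ->
  apartR i j -> apartR i l -> apartR i k -> apartR j l -> apartR j k -> apartR l k ->
  False.
Proof.
move=> ies jes les kes aij ail aik ajl ajk alk.
have blockN x : x < size es ->
    (block A B C (e x).1 \in [set D in [:: A; B; C]]) &&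
    (block A B C (e x).2 \in [set D in [:: A; B; C]]).
  move=> xes; have [x19 x29] := edge_lt9 xes.
  have blk n : n < 9 -> block A B C n \in [:: A; B; C].
    by move=> n9; rewrite /block mem_nth // ltn_divLR.
  by rewrite !in_set !blk.
have : 4 <= #|[set D in [:: A; B; C]]|.
  apply: (apart_size_le (ix := [:: i; j; l; k])).
  - by apply/subsetP => D; rewrite !inE => /or3P[]/eqP->.
  - by move=> x; rewrite !inE => /or4P[]/eqP->.
  - by rewrite /= aij ail aik ajl ajk alk.
  - by move=> x; rewrite mem_seq4 => /or4P[]/eqP->; apply: blockN.
by rewrite cardsE leqNgt ltnS (card_size [:: A; B; C]).
Qed.

Lemma no_conflict cs k : k < size es ->
  (forall i j, i <= k -> j <= k -> (nth 0 cs i == nth 0 cs j) = (col i == col j)) ->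
  ~~ conflict es cs k.
Proof.
move=> kes csE.
have ap i j : i <= k -> j <= k -> apart es cs i j = apartR i j.
  by move=> ik jk; rewrite /apart /apartR csE.
have ies i : i <= k -> i < size es by move=> ik; apply: leq_ltn_trans ik kes.
rewrite negb_or; apply/andP; split.
  apply/hasPn => i; rewrite mem_iota add0n => /andP[_ ik].
  rewrite csE ?(ltnW ik) //; apply/negP => /andP[/eqP cik mik].
  by move: (ik); rewrite (meet_col_eq (ies i (ltnW ik)) kes mik cik) ltnn.
apply/hasPn => i; rewrite mem_filter mem_iota => /andP[aik /andP[_ /ltnW ik]].
rewrite ap // in aik; rewrite negb_or; apply/andP; split.
  apply/hasPn => j; rewrite !mem_filter mem_iota.
  move=> /andP[/andP[ji aji] /andP[ajk /andP[_ /ltnW jk]]].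
  rewrite ap ?(ltnW (leq_ltn_trans ji ik)) // in aji; rewrite ap // in ajk.
  apply/negP => /andP[sik sjk].
  by apply: (no_apart_triple (ies i ik) (ies j jk) kes sik sjk) => //; rewrite apartR_sym.
apply/hasPn => j; rewrite !mem_filter mem_iota.
move=> /andP[/andP[ji aji] /andP[ajk /andP[_ /ltnW jk]]].
apply/hasPn => l; rewrite !mem_filter mem_iota.
move=> /andP[/andP[li ali] /andP[alk /andP[_ /ltnW lk]]]; apply/negP => /andP[lj alj].
rewrite !ap // in aji ajk ali alk alj.
by apply: (no_apart_quad (ies l lk) (ies j jk) (ies i ik) kes);
  rewrite // apartR_sym.
Qed.

Lemma refutes_unrealizable : ~~ refutes es (size es) [::].
Proof.
apply/negP => ref.
pose cols := [seq col i | i <- iota 0 (size es)].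
pose full := [seq index X cols | X <- cols].
have size_cols : size cols = size es by rewrite size_map size_iota.
have size_full : size full = size es by rewrite size_map.
have cand k : 0 <= k < size full -> nth 0 full k \in candidates (take k full).
  by move=> /andP[_ kf]; apply: first_occurrence_candidates; rewrite size_cols -size_full.
have [k kes] := refutesP ref size_full (esym (take0 full)) cand.
apply/negP; rewrite size_full in kes; apply: no_conflict => // i j ik jk.
have ies : i < size es by apply: leq_ltn_trans ik kes.
have jes : j < size es by apply: leq_ltn_trans jk kes.
rewrite !nth_take ?ltnS // (first_occurrence_eq set0) ?size_cols //.
by rewrite !(nth_map 0) ?size_iota // !nth_iota.
Qed.

End Realization.

Lemma enum_set_at (T : finType) (D : {set T}) x i : x \in D -> i < #|D| ->
  exists s : seq T, [/\ uniq s, s =i D, size s = #|D| & nth x s i = x].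
Proof.
move=> xD iD; set r := rem x (enum D).
have size_r : size r = #|D|.-1 by rewrite size_rem ?mem_enum // cardE.
exists (take i r ++ x :: drop i r).
have ps : perm_eq (take i r ++ x :: drop i r) (enum D).
  by rewrite -cat1s perm_catCA /= cat_take_drop perm_sym perm_to_rem ?mem_enum.
split.
- by rewrite (perm_uniq ps) enum_uniq.
- by move=> y; rewrite (perm_mem ps) mem_enum.
- by rewrite (perm_size ps) cardE.
- by rewrite nth_cat size_takel ?ltnn ?subnn // size_r -ltnS (ltn_predK iD).
Qed.

Lemma labelling (T : finType) (A B C : {set T}) a b c :
  #|A| = 3 -> #|B| = 3 -> #|C| = 3 ->
  [disjoint A & B] -> [disjoint A & C] -> [disjoint B & C] ->
  a \in A -> b \in B -> c \in C ->
  exists lab : nat -> T, [/\ {in gtn 9 &, injective lab},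
    forall n, n < 9 -> lab n \in block A B C n,
    (forall i x, i < 3 -> x \in nth set0 [:: A; B; C] i ->
      exists2 j, j < 3 & lab (3 * i + j) = x),
    (lab 2, lab 5) = (a, b) & lab 6 = c].
Proof.
move=> A3 B3 C3 dAB dAC dBC aA bB cC.
set Ds := [:: A; B; C].
have [sA [uA mA zA sa]] := @enum_set_at _ A a 2 aA ltac:(by rewrite A3).
have [sB [uB mB zB sb]] := @enum_set_at _ B b 2 bB ltac:(by rewrite B3).
have [sC [uC mC zC sc]] := @enum_set_at _ C c 0 cC ltac:(by rewrite C3).
set S := [:: sA; sB; sC].
have S_uniq i : i < 3 -> uniq (nth [::] S i) by case: i => [|[|[|]]].
have S_size i : i < 3 -> size (nth [::] S i) = 3.
  by case: i => [|[|[|]]] // _; rewrite ?zA ?zB ?zC.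
have S_mem i : i < 3 -> nth [::] S i =i nth set0 Ds i by case: i => [|[|[|]]].
have Ds_eq i i' x : i < 3 -> i' < 3 ->
    x \in nth set0 Ds i -> x \in nth set0 Ds i' -> i = i'.
  case: i i' => [|[|[|]]] // [|[|[|]]] //= _ _ x1 x2;
  by [ rewrite (disjointFr dAB x1) in x2 | rewrite (disjointFr dAC x1) in x2
     | rewrite (disjointFr dBC x1) in x2 | rewrite (disjointFl dAB x1) in x2
     | rewrite (disjointFl dAC x1) in x2 | rewrite (disjointFl dBC x1) in x2 ].
pose lab n := nth a (nth [::] S (n %/ 3)) (n %% 3).
have labE i j : j < 3 -> lab (3 * i + j) = nth a (nth [::] S i) j.
  by move=> j3; rewrite /lab; congr (nth _ (nth _ _ _) _); lia.
have lab_blk n : n < 9 -> lab n \in block A B C n.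
  move=> n9; have n3 : n %/ 3 < 3 by lia.
  by rewrite -S_mem // mem_nth // S_size // ltn_mod.
exists lab; split.
- move=> m n; rewrite !inE => m9 n9 eq_lab.
  have mn3 : m %/ 3 = n %/ 3.
    by apply: (Ds_eq _ _ (lab n)) (lab_blk n n9); rewrite -?eq_lab ?(lab_blk m m9); lia.
  have : m %% 3 = n %% 3.
    have n3 : n %/ 3 < 3 by lia.
    apply/eqP; rewrite -(nth_uniq a (s := nth [::] S (n %/ 3)));
      rewrite ?S_size ?S_uniq ?ltn_mod //.
    by move: eq_lab; rewrite /lab mn3 => ->.
  lia.
- exact: lab_blk.
- move=> i x i3 xD; rewrite -S_mem // in xD.
  have jx : index x (nth [::] S i) < 3 by rewrite -(S_size i i3) index_mem.
  by exists (index x (nth [::] S i)); rewrite // labE // nth_index.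
- rewrite -[2]/(3 * 0 + 2) -[5]/(3 * 1 + 2) !labE //= sa.
  by rewrite (@set_nth_default _ sB b) ?zB ?B3 // sb.
- by rewrite -[6]/(3 * 2 + 0) labE //= (@set_nth_default _ sC c) ?zC ?C3.
Qed.

Lemma code_div i k : k < 3 -> (3 * i + k) %/ 3 = i.
Proof. lia. Qed.

Lemma code_mod i k : k < 3 -> (3 * i + k) %% 3 = k.
Proof. lia. Qed.

Lemma code_lt9 i k : i < 3 -> k < 3 -> 3 * i + k < 9.
Proof. lia. Qed.

Lemma card_D2AB_le_codes (T : finType) (F M : {set {set T}}) (P Q : {set T})
    (f g : nat -> T) :
  linear_family F -> is_maximum_matching F M -> P \in M -> Q \in M -> P != Q ->
  (forall x, x \in P -> exists2 i, i < 3 & f i = x) ->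
  (forall y, y \in Q -> exists2 k, k < 3 & g k = y) ->
  #|D2AB F M P Q| <= size [seq c <- iota 0 9 | D2_covers F M (f (c %/ 3)) (g (c %% 3))].
Proof.
move=> linF maxM PM QM PQ fP gQ; set s := filter _ _.
pose h c := (f (c %/ 3), g (c %% 3)).
apply: leq_trans (card_D2AB_le linF maxM PM QM PQ) _.
apply: (@leq_trans #|[set p in map h s]|); last first.
  by rewrite cardsE (leq_trans (card_size _)) ?size_map.
apply/subset_leq_card/subsetP => -[x y]; rewrite !inE /= => /andP[/andP[xP yQ]].
have [i i3 <-] := fP x xP; have [k k3 <-] := gQ y yQ => cov.
apply/mapP; exists (3 * i + k); last by rewrite /h code_div ?code_mod.
by rewrite mem_filter mem_iota add0n leq0n code_lt9 // code_div ?code_mod // cov.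
Qed.

(* The pairs of A x B except (2, 5), the pair (3 + j, 6) of B x C, and the
   pairs of A x C whose codes are in ac. *)
Definition config (ac : seq nat) (j : nat) : seq (nat * nat) :=
  [seq (k %/ 3, 3 + k %% 3) | k <- iota 0 8] ++ (3 + j, 6) ::
  [seq (k %/ 3, 6 + k %% 3) | k <- ac].

Definition certificate :=
  all (fun ac => (size ac != 7) ||
        all (fun j => let es := config ac j in
                      [&& all wf_edge es, uniq es & refutes es (size es) [::]])
            (iota 0 3))
    (subseqs (iota 0 9)).

Lemma certificate_ok : certificate.
Proof. by vm_compute. Qed.

Lemma empty_D2BC (T : finType) (F M : {set {set T}}) (A B C : {set T}) :
  uniform3 F -> linear_family F -> is_maximum_matching F M ->
  A \in M -> B \in M -> C \in M -> A != B -> A != C -> B != C ->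
  #|D2AB F M A B| = 8 -> 7 <= #|D2AB F M A C| -> D2AB F M B C = set0.
Proof.
move=> F3 linF maxM AM BM CM AB AC BC D8 D7.
apply/eqP; rewrite -subset0; apply/subsetP => E0 E0BC; exfalso.
have [[a0 b0] ab0 miss] := D2AB8_missing_pair F3 linF maxM AM BM AB D8.
move: ab0; rewrite in_setX /= => /andP[a0A b0B].
move: E0BC; rewrite inE => /andP[E0D /andP[/set0Pn[b /setIP[bE bB]]]].
case/set0Pn => c /setIP[cE cC].
have [lab [lab_inj lab_blk lab_onto lab_ab0 lab6]] :=
  labelling (card_matching F3 maxM AM) (card_matching F3 maxM BM)
    (card_matching F3 maxM CM) (matching_disjoint maxM AM BM AB)
    (matching_disjoint maxM AM CM AC) (matching_disjoint maxM BM CM BC) a0A b0B cC.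
have [j j3 labj] := lab_onto 1 b isT bB.
set s := [seq k <- iota 0 9 | D2_covers F M (lab (k %/ 3)) (lab (6 + k %% 3))].
have ac7 : size (take 7 s) = 7.
  rewrite size_takel // (leq_trans D7) //.
  apply: (card_D2AB_le_codes (g := fun k => lab (6 + k)) linF maxM AM CM AC).
  - by move=> x xA; apply: lab_onto 0 x isT xA.
  - by move=> y yC; apply: lab_onto 2 y isT yC.
have := certificate_ok; rewrite /certificate => /allP/(_ (take 7 s)).
rewrite mem_subseqs ?(subseq_trans (take_subseq _ _) (filter_subseq _ _)) // ac7 eqxx.
have jI : j \in iota 0 3 by rewrite mem_iota j3.
move=> /(_ isT)/allP/(_ j jI)/and3P[wf un ref].
suff covered : {in config (take 7 s) j, forall e, D2_covers F M (lab e.1) (lab e.2)}.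
  by rewrite (negbTE (refutes_unrealizable F3 linF maxM AM BM CM lab_inj lab_blk
                        wf un covered)) in ref.
move=> e; rewrite /config mem_cat => /orP[/mapP[k kI ->] | ].
- move: kI; rewrite mem_iota add0n => /andP[_ k8].
  have k3 : k %/ 3 < 3 by rewrite ltn_divLR // (ltn_trans k8).
  have r9 : 3 + k %% 3 < 9 := @code_lt9 1 _ isT (ltn_mod k 3).
  have k9 := leq_trans k3 (isT : 3 <= 9).
  apply: (miss (lab (k %/ 3), lab (3 + k %% 3))).
    have := lab_blk _ k9; have := lab_blk _ r9.
    have r1 : (3 + k %% 3) %/ 3 = 1 := code_div 1 (ltn_mod k 3).
    by rewrite in_setX /block r1 (divn_small k3) => -> ->.
  apply/negP; rewrite -lab_ab0 xpair_eqE => /andP[/eqP e1 /eqP e2].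
  have k2 : k %/ 3 = 2 by apply: lab_inj e1.
  have r2 : k %% 3 = 2 by apply/(addnI (y := 3))/lab_inj.
  by move: k8; rewrite (divn_eq k 3) k2 r2.
rewrite in_cons => /orP[/eqP-> | /mapP[k kac ->]].
- rewrite /= -[3 + j]/(3 * 1 + j) labj lab6.
  by apply/existsP; exists E0; rewrite E0D bE cE.
- by move: (mem_take kac); rewrite mem_filter => /andP[].
Qed.

Theorem proposition4 (T : finType) (F M : {set {set T}}) (A B C : {set T}) :
  uniform3 F -> linear_family F -> is_maximum_matching F M ->
  A \in M -> B \in M -> C \in M -> A != B -> A != C -> B != C ->
  #|D2AB F M A B| = 8 ->
  #|D2AB F M A C| + #|D2AB F M B C| <= 12.
Proof.
move=> F3 linF maxM AM BM CM AB AC BC D8.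
have le9 := card_D2AB_le9 F3 linF maxM.
have [AC7 | AC6] := leqP 7 #|D2AB F M A C|.
  rewrite (empty_D2BC F3 linF maxM AM BM CM AB AC BC D8 AC7) cards0 addn0.
  exact: leq_trans (le9 _ _ AM CM AC) _.
have [BC7 | BC6] := leqP 7 #|D2AB F M B C|.
  have D8' : #|D2AB F M B A| = 8 by rewrite D2AB_sym.
  rewrite (empty_D2BC F3 linF maxM BM AM CM _ BC AC D8' BC7) ?cards0 ?add0n 1?eq_sym //.
  exact: leq_trans (le9 _ _ BM CM BC) _.
lia.
Qed.
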